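(* Let $n\ge1$, $k\in\{1,\dots,n\}$, scores $s_1,\dots,s_n\in\mathbb{R}$ not all equal, $p=\frac{n-k}{n}+\frac{1}{2n}$, $f_i(x)=\rho_p(s_i-x)$ and $f=\sum_{i=1}^n f_i$. Let $\tilde f_h=\sum_{i=1}^n\tilde f_i^h$ be a convex smooth approximation of $f$ with smoothing parameter $h$ satisfying the Standing Assumption below (with constants $L_h,M_h,U_h$), and let $\theta_k^h$ be a minimizer of $\tilde f_h$ over $\mathbb{R}$. If $U_h\le \frac{g_m\Delta}{8}$ and $x\in\mathbb{R}$ satisfies $\tilde f_h(x)-\tilde f_h(\theta_k^h)<\frac{g_m\Delta}{4}$, then $|x-\theta_k|\le\frac{\Delta}{2}$.
   Context: The pinball loss is $\rho_p(x)=p\,x$ if $x\ge0$ and $\rho_p(x)=-(1-p)x$ if $x<0$. The scores sorted in descending order are $\theta_1\ge\cdots\ge\theta_n$; $\theta_k$ is the $k$-th largest score (the unique minimizer of $f$). $\overline{m}$ is the number of indices $j\le k$ with $\theta_j=\theta_k$, $\underline{m}$ is the number of indices $j>k$ with $\theta_j=\theta_k$, $g_m=\min\{\overline{m}-\frac12,\underline{m}+\frac12\}$, and $\Delta=\min\{|s_i-\theta_k|: s_i\ne\theta_k\}$. Standing Assumption: each $\tilde f_i^h:\mathbb{R}\to\mathbb{R}$ is convex and differentiable, $\tilde f_h=\sum_i\tilde f_i^h$ satisfies $|\tilde f_h(x)-\tilde f_h(y)|\le L_h|x-y|$ and $|\tilde f_h'(x)-\tilde f_h'(y)|\le M_h|x-y|$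 for all $x,y$, $|f(x)-\tilde f_h(x)|\le U_h$ for all $x$, and each $\tilde f_i^h$ satisfies $|(\tilde f_i^h)'(x)-(\tilde f_i^h)'(y)|\le\frac{M_h}{n}|x-y|$ for all $x,y$. *)

From HB Require Import structures.
From mathcomp Require Import all_boot all_order all_algebra.
From mathcomp Require Import all_classical all_reals all_analysis.
Set Implicit Arguments. Unset Strict Implicit. Unset Printing Implicit Defensive.
Import Order.TTheory GRing.Theory Num.Theory.
Local Open Scope ring_scope.

Section Defs.
Variable R : realType.

Definition pinball (p x : R) : R := if 0 <= x then p * x else - (1 - p) * x.

Definition plevel (n k : nat) : R := (n - k)%:R / n%:R + 1 / (2 * n%:R).

Definition fobj (n k : nat) (s : 'I_n -> R) (x : R) : R :=
  \sum_(i < n) pinball (plevel n k) (s i - x).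

(* scores sorted in descending order: theta_1 >= ... >= theta_n,
   stored 0-indexed (theta_j = nth 0 (sorted_scores s) (j-1)) *)
Definition sorted_scores (n : nat) (s : 'I_n -> R) : seq R :=
  sort (fun a b : R => b <= a) [seq s i | i <- enum 'I_n].

Definition theta (n : nat) (s : 'I_n -> R) (k : nat) : R :=
  nth 0 (sorted_scores s) k.-1.

(* mbar = #{ j <= k : theta_j = theta_k } (1-indexed j) *)
Definition mbar (n : nat) (s : 'I_n -> R) (k : nat) : nat :=
  count (fun j => nth 0 (sorted_scores s) j == theta s k) (iota 0 k).

(* munder = #{ j > k : theta_j = theta_k }, j <= n *)
Definition munder (n : nat) (s : 'I_n -> R) (k : nat) : nat :=
  count (fun j => nth 0 (sorted_scores s) j == theta s k) (iota k (n - k)).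

Definition gm (n : nat) (s : 'I_n -> R) (k : nat) : R :=
  Num.min ((mbar s k)%:R - 1 / 2) ((munder s k)%:R + 1 / 2).

Definition is_Delta (n : nat) (s : 'I_n -> R) (k : nat) (D : R) : Prop :=
  (exists i, s i != theta s k /\ `|s i - theta s k| = D) /\
  (forall i, s i != theta s k -> D <= `|s i - theta s k|).

Definition convex_fun (g : R -> R) : Prop :=
  forall (x y t : R), 0 <= t -> t <= 1 ->
    g (t * x + (1 - t) * y) <= t * g x + (1 - t) * g y.

Definition standing_assumption (n k : nat) (s : 'I_n -> R)
    (F : 'I_n -> R -> R) (L M U : R) : Prop :=
  let ft := fun x => \sum_(i < n) F i x in
  (forall i, convex_fun (F i)) /\
  (forall i x, derivable (F i) x 1) /\
  (forall x y, `|ft x - ft y| <= L * `|x - y|) /\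
  (forall x y, `|derive1 ft x - derive1 ft y| <= M * `|x - y|) /\
  (forall x, `|fobj k s x - ft x| <= U) /\
  (forall i x y, `|derive1 (F i) x - derive1 (F i) y| <= M / n%:R * `|x - y|).

End Defs.

From HB Require Import structures.
From mathcomp Require Import all_boot all_order all_algebra.
From mathcomp Require Import all_classical all_reals all_analysis.
From mathcomp Require Import ring lra zify.
Import Order.TTheory GRing.Theory Num.Theory.
Local Open Scope ring_scope.

(* The pinball term z |-> rho_p(s_i - z) has subgradient 1 - p at theta_k
   when s_i <= theta_k and -p when s_i >= theta_k.  At least n - k + mbar
   scores are <= theta_k and at most n - k - munder are < theta_k, while
   n p = n - k + 1/2, so summing the subgradient inequalities shows that f
   has a sharp minimum: f x - f theta_k >= g_m |x - theta_k|.  Smoothing moves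
   f by at most U_h, hence f x - f theta_k < 2 U_h + g_m Delta / 4
   <= g_m Delta / 2. *)

Section PinballSubgradient.
Context {R : realType}.

(* [b%:R - p] is a subgradient of [z |-> pinball p (y - z)] at [t]; [b] may
   be either truth value when [y = t]. *)
Lemma pinball_subgradient (p y t x : R) (b : bool) :
  (y < t -> b) -> (b -> y <= t) ->
  (b%:R - p) * (x - t) <= pinball p (y - x) - pinball p (y - t).
Proof.
move=> ltb leb; have ty : b = false -> t <= y.
  by move=> b0; rewrite leNgt; apply/negP => /ltb; rewrite b0.
rewrite /pinball; case: (lerP 0 (y - x)); case: (lerP 0 (y - t));
  case: b ltb leb ty => /= ltb leb ty ? ?; nra.
Qed.

Lemma sum_sub_const_count (l : seq R) (P : pred R) (p : R) :
  \sum_(y <- l) ((P y)%:R - p) = (count P l)%:R - (size l)%:R * p.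
Proof.
elim: l => [|y l IH]; first by rewrite big_nil /=; lra.
by rewrite big_cons IH /=; case: (P y); rewrite /= ?natrD; lra.
Qed.

Lemma sum_pinball_subgradient (l : seq R) (P : pred R) (p t x : R) :
  (forall y, y < t -> P y) -> (forall y, P y -> y <= t) ->
  ((count P l)%:R - (size l)%:R * p) * (x - t) <=
  \sum_(y <- l) pinball p (y - x) - \sum_(y <- l) pinball p (y - t).
Proof.
move=> ltP Ple; rewrite -sum_sub_const_count mulr_suml -sumrB.
by apply: ler_sum => y _; apply: pinball_subgradient; [apply: ltP|apply: Ple].
Qed.

End PinballSubgradient.

Section SortedDescending.
Context {R : realDomainType} {l : seq R} {k : nat}.
Hypothesis l_sorted : sorted (fun a b : R => b <= a) l.
Hypotheses (k_gt0 : (0 < k)%N) (k_le_size : (k <= size l)%N).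

Let t := nth 0 l k.-1.

Let nth_ge (i j : nat) : (i <= j)%N -> (j < size l)%N -> nth 0 l j <= nth 0 l i.
Proof.
move=> ij jl; apply: (sorted_leq_nth (leT := fun a b : R => b <= a)) => //.
- by move=> a b c ba cb; apply: le_trans cb ba.
- by rewrite inE; lia.
Qed.

Lemma count_take_eq_nth_gt0 : (0 < count (pred1 t) (take k l))%N.
Proof.
rewrite -has_count; apply/hasP; exists t; last by rewrite /= eqxx.
by apply/(nthP 0); exists k.-1; rewrite ?size_takel ?nth_take //; lia.
Qed.

Lemma count_le_nth_ge :
  (size l - k + count (pred1 t) (take k l) <= count (fun y => (y <= t)%R) l)%N.
Proof.
rewrite -[l in (_ <= count _ l)%N](cat_take_drop k) count_cat addnC leq_add //.
  by apply: sub_count => y /eqP ->.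
have : all (fun y => y <= t) (drop k l).
  apply/(all_nthP 0) => i; rewrite size_drop => hi.
  by rewrite nth_drop; apply: nth_ge; rewrite -?ltn_subRL //; lia.
by rewrite all_count size_drop => /eqP ->.
Qed.

Lemma count_lt_nth_le :
  (count (fun y => (y < t)%R) l + count (pred1 t) (drop k l) <= size l - k)%N.
Proof.
rewrite -[l in (count _ l + _ <= _)%N](cat_take_drop k) count_cat.
have /eqP -> : count (fun y => y < t) (take k l) == 0%N.
  rewrite -leqn0 leqNgt -has_count; apply/hasP => -[y /(nthP 0)[i]].
  rewrite size_takel // => ik <-; rewrite nth_take // ltNge.
  by rewrite nth_ge //; lia.
rewrite add0n -(size_drop k l) -(count_predC (fun y => y < t)) leq_add2l.
by apply: sub_count => y /eqP -> /=; rewrite ltxx.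
Qed.

End SortedDescending.

Section QuantileObjective.
Context {R : realType} {n k : nat} (s : 'I_n -> R).
Hypotheses (k_gt0 : (0 < k)%N) (k_le_n : (k <= n)%N).

Let l := sorted_scores s.
Let t := theta s k.

Lemma size_sorted_scores : size l = n.
Proof. by rewrite /l /sorted_scores size_sort size_map size_enum_ord. Qed.

Lemma sorted_scores_sorted : sorted (fun a b : R => b <= a) l.
Proof. by apply: sort_sorted => a b; apply: le_total. Qed.

Lemma fobj_sorted_scores (z : R) :
  fobj k s z = \sum_(y <- l) pinball (plevel R n k) (y - z).
Proof.
rewrite /fobj /l /sorted_scores (perm_big _ (permEl (perm_sort _ _))).
by rewrite big_map big_enum.
Qed.

Lemma mbar_take : mbar s k = count (pred1 t) (take k l).
Proof.
rewrite /mbar -(map_nth_iota0 0 (_ : (k <= size l)%N)) ?size_sorted_scores //.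
by rewrite count_map.
Qed.

Lemma munder_drop : munder s k = count (pred1 t) (drop k l).
Proof.
have -> : drop k l = [seq nth 0 l j | j <- iota k (n - k)].
  rewrite map_nth_iota ?size_sorted_scores // take_oversize //.
  by rewrite size_drop size_sorted_scores.
by rewrite count_map.
Qed.

Lemma n_mul_plevel : n%:R * plevel R n k = (n - k)%:R + 1 / 2.
Proof.
have n_neq0 : n%:R != 0 :> R by rewrite pnatr_eq0 -lt0n; lia.
by rewrite /plevel; field.
Qed.

Lemma gm_gt0 : 0 < gm s k.
Proof.
have : (1 <= mbar s k)%N.
  by rewrite mbar_take count_take_eq_nth_gt0 ?sorted_scores_sorted ?size_sorted_scores.
rewrite -(ler_nat R) /gm lt_min => mb1; apply/andP; split; first lra.
by rewrite ltr_wpDl.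
Qed.

Lemma fobj_sharp_min (x : R) : gm s k * `|x - t| <= fobj k s x - fobj k s t.
Proof.
have srt := sorted_scores_sorted; have kl : (k <= size l)%N by rewrite size_sorted_scores.
rewrite !fobj_sorted_scores.
have [tx|xt] := lerP t x.
- have := count_le_nth_ge srt k_gt0 kl; rewrite -mbar_take size_sorted_scores.
  rewrite -(ler_nat R) natrD => cnt.
  have := sum_pinball_subgradient l (fun y => y <= t) (plevel R n k) t x.
  rewrite size_sorted_scores n_mul_plevel => /(_ (fun _ h => ltW h) (fun _ h => h)) slope.
  apply: le_trans _ _ _ _ slope; rewrite ler_wpM2r ?subr_ge0 // /gm ge_min.
  by apply/orP; left; lra.
- have := count_lt_nth_le srt k_gt0 kl; rewrite -munder_drop size_sorted_scores.
  rewrite -(ler_nat R) natrD => cnt.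
  have := sum_pinball_subgradient l (fun y => y < t) (plevel R n k) t x.
  rewrite size_sorted_scores n_mul_plevel => /(_ (fun _ h => h) (fun _ h => ltW h)) slope.
  apply: le_trans _ _ _ _ slope; rewrite -[x - t]opprB mulrN -mulNr opprB.
  rewrite ler_wpM2r ?subr_ge0 ?(ltW xt) // /gm ge_min; apply/orP; right; lra.
Qed.

End QuantileObjective.

Theorem theorem1 (R : realType) (n k : nat) (s : 'I_n -> R)
    (F : 'I_n -> R -> R) (L M U Delta thetah x : R) :
  (1 <= n)%N -> (1 <= k)%N -> (k <= n)%N ->
  (exists i j, s i != s j) ->
  is_Delta s k Delta ->
  standing_assumption k s F L M U ->
  (forall y, \sum_(i < n) F i thetah <= \sum_(i < n) F i y) ->
  U <= gm s k * Delta / 8 ->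
  \sum_(i < n) F i x - \sum_(i < n) F i thetah < gm s k * Delta / 4 ->
  `|x - theta s k| <= Delta / 2.
Proof.
move=> _ k_gt0 k_le_n _ _ [_ [_ [_ [_ [approx _]]]]] thetah_min U_small x_near.
set t := theta s k.
have f_near : fobj k s x - fobj k s t < gm s k * Delta / 2.
  have := approx x; have := approx t; have := thetah_min t.
  rewrite !ler_norml => ? /andP[? ?] /andP[? ?]; lra.
have gm_pos := gm_gt0 s k_gt0 k_le_n.
have := le_lt_trans (fobj_sharp_min s k_gt0 k_le_n x) f_near.
rewrite -mulrA ltr_pM2l // => /ltW; lra.
Qed.
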